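(* For any integer $k\ge2$: (a) The set $\{a\in[\frac12,\frac23]:\varkappa_a\ge k\}$ is a finite union of closed non-degenerate intervals. On each of these intervals the functions $a\mapsto T_a^1(0),\dots,a\mapsto T_a^k(0)$ are strictly decreasing and continuous, and $a\mapsto\delta_1,\dots,a\mapsto\delta_{k-1}$ are constant. (b) The set $\{a\in[\frac12,\frac23]:\varkappa_a=k\}$ is the union of all (pairwise disjoint) open intervals $(a'',a')$ such that $T_{a''}^k(0)=1$ and $T_{a'}^k(0)=\frac{2a'-1}{1-a'}$.
   Context: For $a\in[\frac12,\frac23]$ let $I_a=\big(\frac{2a-1}{1-a},1\big)$ and define $T_a$ on $[0,\frac1{1-a}]\setminus I_a$ by $T_a(x)=\frac1a(x+1)$ for $0\le x\le\frac{2a-1}{1-a}$ and $T_a(x)=\frac1a(x-1)$ for $1\le x\le\frac1{1-a}$; for $a=\frac23$ set $T_{2/3}(1)=0$. Let $\varkappa_a=\inf\{k\ge0:T_a^k(0)\in I_a\}$ ($\inf\emptyset=\infty$) and, for $0\le k\le\varkappa_a$, $\delta_k=\delta_k(a)=\mathbb 1\{T_a^k(0)<1\}$. *)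

From HB Require Import structures.
From mathcomp Require Import all_boot all_order all_algebra.
From mathcomp Require Import all_classical all_reals all_analysis.
Set Implicit Arguments. Unset Strict Implicit. Unset Printing Implicit Defensive.
Import Order.TTheory GRing.Theory Num.Theory.
Local Open Scope ring_scope.

Definition param_ok {R : realType} (a : R) : Prop := 1/2 <= a <= 2/3.

Definition inI {R : realType} (a x : R) : Prop := (2*a - 1)/(1 - a) < x < 1.

(* T_a, extended to a total function on R.  On the domain
   [0, 1/(1-a)] \ I_a it agrees with the paper's T_a:
   x < 1 (i.e. x ∈ [0,(2a-1)/(1-a)]) gives (x+1)/a, x >= 1 gives (x-1)/a;
   in particular T_{2/3}(1) = 0. Values on I_a are never used, since the
   orbit is only considered up to the first hitting time of I_a. *)
Definition Tmap {R : realType} (a x : R) : R :=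
  if x < 1 then (x + 1) / a else (x - 1) / a.

Definition orb {R : realType} (a : R) (k : nat) : R := iter k (Tmap a) 0.

(* varkappa_a >= k, i.e. T_a^j(0) ∉ I_a for all j < k
   (this is exactly inf{j : T_a^j(0) ∈ I_a} >= k, with inf ∅ = ∞). *)
Definition kappa_ge {R : realType} (a : R) (k : nat) : Prop :=
  forall j, (j < k)%N -> ~ inI a (orb a j).

Definition kappa_eq {R : realType} (a : R) (k : nat) : Prop :=
  kappa_ge a k /\ inI a (orb a k).

Definition delta {R : realType} (a : R) (j : nat) : bool := orb a j < 1.

Definition good_pair {R : realType} (k : nat) (p q : R) : Prop :=
  [/\ p < q,
      (forall a, p <= a <= q -> param_ok a /\ kappa_ge a k),
      orb p k = 1 &
      orb q k = (2*q - 1)/(1 - q)].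

(* On a parameter interval on which the orbit of 0 avoids the hole
   up to time k, the branch taken at each step cannot change: moving from the
   branch x >= 1 to the branch x <= (2a-1)/(1-a) as a increases would, by
   continuity, put T_a^j(0) at the midpoint of the hole.  So each T_a^j(0) is
   there a fixed composition of the maps x |-> (x +- 1)/a, hence continuous and,
   by induction on j, strictly decreasing in a.  The set {kappa >= k} is covered
   by finitely many blocks [l, r] with T_l^k(0) = 1/(1-l) > 1 and, when
   T_r^k(0) < 1, T_r^k(0) < (2r-1)/(1-r).  In such a block the decreasing map
   a |-> T_a^k(0) first crosses 1 at some a1 and then meets the increasing left
   end of the hole at some a2 > a1, so {kappa = k} is (a1, a2) there, while
   [l, a1] and [a2, r] are blocks of the next level. *)

From HB Require Import structures.
From mathcomp Require Import all_boot all_order all_algebra.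
From mathcomp Require Import all_classical all_reals all_analysis.
From mathcomp Require Import lra ring.
Import Order.TTheory GRing.Theory Num.Theory.
Import numFieldNormedType.Exports.
Local Open Scope ring_scope.
Local Open Scope classical_set_scope.
Set Implicit Arguments. Unset Strict Implicit. Unset Printing Implicit Defensive.

Section Orbits.
Variable R : realType.
Implicit Types a x y : R.

Definition hole_lo a : R := (2*a - 1)/(1 - a).

Definition right_end a : R := 1/(1 - a).

Lemma param_pos a : param_ok a -> 0 < a /\ 0 < 1 - a.
Proof. by move=> /andP[h1 h2]; split; lra. Qed.

Lemma param_eq23 a : param_ok a -> 2/3 <= a -> a = 2/3.
Proof. by move=> /andP[_ h] h'; apply/le_anti; rewrite h h'. Qed.

Lemma hole_lo23 : hole_lo (2/3) = 1 :> R.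
Proof. by rewrite /hole_lo; field. Qed.

Lemma hole_lo_lt1 a : param_ok a -> (hole_lo a < 1) = (a < 2/3).
Proof.
move=> pa; have [_ h] := param_pos pa.
by rewrite /hole_lo ltr_pdivrMr // mul1r; apply/idP/idP => ?; lra.
Qed.

Lemma hole_lo_le1 a : param_ok a -> hole_lo a <= 1.
Proof.
move=> pa; have [_ h] := param_pos pa; move: pa => /andP[_ h2].
by rewrite /hole_lo ler_pdivrMr // mul1r; lra.
Qed.

Lemma hole_lo_ge0 a : param_ok a -> 0 <= hole_lo a.
Proof. by move=> /andP[h1 h2]; rewrite /hole_lo divr_ge0 //; lra. Qed.

Lemma hole_lo_lt x y : param_ok x -> param_ok y -> x < y -> hole_lo x < hole_lo y.
Proof.
move=> /param_pos[_ hx] /param_pos[_ hy] xy.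
by rewrite /hole_lo ltr_pdivrMr // mulrAC ltr_pdivlMr //; nra.
Qed.

Lemma hole_lo_le x y : param_ok x -> param_ok y -> x <= y -> hole_lo x <= hole_lo y.
Proof.
by move=> px py; rewrite le_eqVlt => /predU1P[->|/(hole_lo_lt px py)/ltW].
Qed.

Lemma hole_lo_continuous a : a != 1 -> {for a, continuous hole_lo}.
Proof.
move=> a1; apply: continuousM.
  by apply: continuousD; [apply: continuousM; [exact: cvg_cst|exact: cvg_id]|exact: cvg_cst].
apply: continuousV; first by rewrite subr_eq0 eq_sym.
by apply: continuousD; [exact: cvg_cst|apply: continuousN; exact: cvg_id].
Qed.

Lemma right_end_gt1 a : param_ok a -> 1 < right_end a.
Proof.
move=> pa; have [_ h] := param_pos pa; move: pa => /andP[h1 _].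
by rewrite /right_end ltr_pdivlMr //; lra.
Qed.

Lemma Tmap_hole_lo a : param_ok a -> a < 2/3 -> Tmap a (hole_lo a) = right_end a.
Proof.
move=> pa a23; have [a0 a1] := param_pos pa.
rewrite /Tmap hole_lo_lt1 // a23 /hole_lo /right_end.
by field; rewrite !gt_eqF.
Qed.

Lemma Tmap_right_end a : param_ok a -> Tmap a (right_end a) = right_end a.
Proof.
move=> pa; have [a0 a1] := param_pos pa.
rewrite /Tmap ltNge (ltW (right_end_gt1 pa)) /= /right_end.
by field; rewrite !gt_eqF.
Qed.

Lemma Tmap1 a : Tmap a 1 = 0.
Proof. by rewrite /Tmap ltxx subrr mul0r. Qed.

Lemma orbS a k : orb a k.+1 = Tmap a (orb a k).
Proof. exact: iterS. Qed.

Lemma orbD a m n : orb a (m + n) = iter m (Tmap a) (orb a n).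
Proof. exact: iterD. Qed.

Lemma orb_ge0 a k : 0 < a -> 0 <= orb a k.
Proof.
move=> a0; elim: k => [|k IH] //; rewrite orbS /Tmap.
by case: ltP => h; rewrite divr_ge0 //; lra.
Qed.

Lemma orb_mod a p k : orb a p = 0 -> orb a k = orb a (k %% p).
Proof.
move=> hp; have mul0 t : orb a (t * p) = 0.
  by elim: t => [|t IH] //; rewrite mulSn orbD IH.
by rewrite {1}(divn_eq k p) addnC orbD mul0.
Qed.

(* Once the orbit reaches [hole_lo a] it is stuck at the fixed point [right_end a]. *)
Lemma orb_return_neq_hole_lo a p m : param_ok a -> a < 2/3 -> (0 < p)%N ->
  orb a p = 0 -> orb a m != hole_lo a.
Proof.
move=> pa a23 p0 hp; apply/eqP => hm.
have stuck n : orb a (n + m.+1) = right_end a.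
  by rewrite orbD orbS hm Tmap_hole_lo // iter_fix // Tmap_right_end.
have := stuck (m.+1 * p - m.+1)%N; rewrite subnK ?leq_pmulr // (orb_mod _ hp) modnMl.
by have := right_end_gt1 pa; rewrite /orb /=; lra.
Qed.

Lemma notin_hole a x : ~ inI a x <-> x <= hole_lo a \/ 1 <= x.
Proof.
rewrite /inI -/(hole_lo a); split; last by case=> h /andP[]; lra.
move=> H; case: (leP x (hole_lo a)) => h; [by left|right].
by rewrite leNgt; apply/negP => h1; apply: H; rewrite h h1.
Qed.

Lemma kappa_geS a k : kappa_ge a k.+1 <-> kappa_ge a k /\ ~ inI a (orb a k).
Proof.
split=> [H|[H1 H2] j]; first by split=> [j jk|]; apply: H; rewrite ltnS // ltnW.
by rewrite ltnS leq_eqVlt => /predU1P[->|/H1].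
Qed.

Definition branch (b : bool) a x : R := (x + (if b then 1 else -1)) / a.

Fixpoint word_orb (w : nat -> bool) a j : R :=
  if j is i.+1 then branch (w i) a (word_orb w a i) else 0.

Lemma orb_word_orb w a j : (forall i, (i < j)%N -> delta a i = w i) ->
  orb a j = word_orb w a j.
Proof.
elim: j => [//|j IH] Hw; rewrite orbS /= -Hw // -IH => [|i ij]; last first.
  by apply: Hw; rewrite ltnS ltnW.
by rewrite /Tmap /branch /delta; case: ifP.
Qed.

Lemma word_orb_continuous w j a : a != 0 -> {for a, continuous (fun b => word_orb w b j)}.
Proof.
move=> a0; elim: j => [|j IH] /=; first exact: cvg_cst.
apply: continuousM; first by apply: continuousD; [exact: IH|exact: cvg_cst].
by apply: continuousV; [|exact: cvg_id].
Qed.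

Lemma IVT_decr (f : R -> R) x y v : x <= y ->
  (forall c, x <= c <= y -> {for c, continuous f}) -> f y <= v <= f x ->
  exists2 c, x <= c <= y & f c = v.
Proof.
move=> xy fc /andP[fy fx].
have cf : {within `[x, y], continuous f}.
  by apply: continuous_in_subspaceT => c; rewrite inE /= in_itv /=; exact: fc.
have [|c] := IVT (v := v) xy cf; first by rewrite ge_min le_max fy fx orbT.
by rewrite in_itv /=; exists c.
Qed.

Definition admissible k a := param_ok a /\ kappa_ge a k.

Definition admissible_on k (p q : R) := forall a, p <= a <= q -> admissible k a.

Section Interval.
Variables (k : nat) (p q : R).
Hypothesis adm : admissible_on k p q.

Let param a : p <= a <= q -> param_ok a.
Proof. by move=> /adm[]. Qed.

Let pos a : p <= a <= q -> 0 < a.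
Proof. by move=> /param/param_pos[]. Qed.

Lemma delta_const_step j w : (j < k)%N ->
  (forall a, p <= a <= q -> orb a j = word_orb w a j) ->
  (forall x y, p <= x -> x <= y -> y <= q -> orb y j <= orb x j) ->
  forall x y, p <= x <= q -> p <= y <= q -> delta x j = delta y j.
Proof.
move=> jk Hw Hm.
suff step x y : p <= x -> x <= y -> y <= q -> delta x j = delta y j.
  move=> x y /andP[px xq] /andP[py yq].
  by case: (leP x y) => [|/ltW] xy; [|symmetry]; apply: step.
move=> px xy yq; have sub c : x <= c <= y -> p <= c <= q.
  by case/andP=> xc cy; rewrite (le_trans px xc) (le_trans cy yq).
have hx : p <= x <= q by rewrite sub // lexx.
have hy : p <= y <= q by rewrite sub // lexx andbT.
have := Hm x y px xy yq; rewrite /delta.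
case: (ltP (orb x j) 1) => ox; case: (ltP (orb y j) 1) => oy // oyx; first lra.
(* Between [x] and [y] the orbit point would cross the middle of the hole. *)
have oyg : orb y j <= hole_lo y by case/notin_hole: ((adm hy).2 j jk) => //; lra.
have gx1 : hole_lo x < 1.
  rewrite (hole_lo_lt1 (param hx)) ltNge; apply/negP => /(param_eq23 (param hx)) ex.
  have ey : y = 2/3 by apply: param_eq23 (param hy) _; rewrite -ex.
  by move: oy; rewrite ey -ex; lra.
pose h a := word_orb w a j - (1 + hole_lo a) / 2.
have hcont c : x <= c <= y -> {for c, continuous h}.
  move=> /sub/param/param_pos[c0 c1].
  apply: continuousD; first by apply: word_orb_continuous; rewrite gt_eqF.
  apply/continuousN/continuousM; last exact: cvg_cst.
  by apply: continuousD; [exact: cvg_cst|apply: hole_lo_continuous; rewrite lt_eqF //; lra].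
have h_sign : h y <= 0 <= h x.
  by have := hole_lo_le1 (param hy); rewrite /h -!Hw // => ?; apply/andP; split; lra.
have [c /[dup] /sub hc /andP[_ cy]] := IVT_decr xy hcont h_sign.
rewrite /h -Hw // => /eqP; rewrite subr_eq0 => /eqP oc.
case: (ltP c (2/3)) => c23.
  have [] := (adm hc).2 j jk; rewrite /inI -/(hole_lo c) oc.
  by rewrite -(hole_lo_lt1 (param hc)) in c23; apply/andP; split; lra.
have ec := param_eq23 (param hc) c23.
have ey : y = 2/3 by apply: param_eq23 (param hy) _; rewrite -ec.
by move: oy; rewrite ey -ec oc ec hole_lo23; lra.
Qed.

Lemma orb_decr_of_delta_const j :
  (forall i a, (i < j)%N -> p <= a <= q -> delta a i = delta p i) ->
  (0 < j)%N -> forall x y, p <= x -> x < y -> y <= q -> orb y j < orb x j.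
Proof.
elim: j => [//|j IH] Hd _ x y px xy yq.
have hx : p <= x <= q by rewrite px (le_trans (ltW xy) yq).
have hy : p <= y <= q by rewrite yq (le_trans px (ltW xy)).
have IH' : (0 < j)%N -> orb y j < orb x j.
  by move=> j0; apply: IH => // i a ij; apply: Hd; rewrite ltnS ltnW.
have ox := orb_ge0 j (pos hx); have x0 := pos hx; have y0 := pos hy.
rewrite !orbS /Tmap -!/(delta _ j) !Hd //.
case: ifP => dp.
  have le_yx : orb y j <= orb x j.
    by case: (posnP j) => [->|/IH'/ltW] //; rewrite /orb.
  by rewrite ltr_pdivrMr // mulrAC ltr_pdivlMr //; nra.
have j0 : (0 < j)%N by case: (posnP j) dp => // ->; rewrite /delta /orb ltr01.
have dy : 1 <= orb y j by rewrite leNgt -/(delta y j) Hd ?dp.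
have := IH' j0; rewrite ltr_pdivrMr // mulrAC ltr_pdivlMr //; nra.
Qed.

Lemma orb_le_of_delta_const j :
  (forall i a, (i < j)%N -> p <= a <= q -> delta a i = delta p i) ->
  forall x y, p <= x -> x <= y -> y <= q -> orb y j <= orb x j.
Proof.
move=> Hd x y px; rewrite le_eqVlt => /predU1P[->//|xy yq].
by case: (posnP j) => [->//|j0]; rewrite ltW // (orb_decr_of_delta_const Hd).
Qed.

Lemma delta_const i a : (i < k)%N -> p <= a <= q -> delta a i = delta p i.
Proof.
elim/ltn_ind: i a => i IH a ik ha.
have Hd i' a' : (i' < i)%N -> p <= a' <= q -> delta a' i' = delta p i'.
  by move=> i'i; apply: IH => //; apply: ltn_trans ik.
have hp : p <= p <= q by case/andP: ha => pa aq; rewrite lexx (le_trans pa aq).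
apply: (delta_const_step ik (w := delta p)) => //.
  by move=> b hb; apply: orb_word_orb => i' i'i; apply: Hd.
exact: orb_le_of_delta_const.
Qed.

Lemma orb_word_orb_on j a : (j <= k)%N -> p <= a <= q -> orb a j = word_orb (delta p) a j.
Proof.
move=> jk ha; apply: orb_word_orb => i ij; apply: delta_const ha.
exact: leq_trans ij jk.
Qed.

Let delta_const_upto j : (j <= k)%N ->
  forall i a, (i < j)%N -> p <= a <= q -> delta a i = delta p i.
Proof. by move=> jk i a ij; apply: delta_const; apply: leq_trans ij jk. Qed.

Lemma orb_decr j : (0 < j <= k)%N ->
  forall x y, p <= x -> x < y -> y <= q -> orb y j < orb x j.
Proof.
by move=> /andP[j0 jk]; apply: orb_decr_of_delta_const j0; apply: delta_const_upto.
Qed.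

Lemma orb_nonincr j : (j <= k)%N ->
  forall x y, p <= x -> x <= y -> y <= q -> orb y j <= orb x j.
Proof. by move=> jk; apply/orb_le_of_delta_const/delta_const_upto. Qed.

Lemma orb_continuous j : (j <= k)%N -> {within `[p, q], continuous (fun a => orb a j)}.
Proof.
move=> jk; apply: (@subspace_eq_continuous _ _ _ (fun a => word_orb (delta p) a j)).
  by move=> a; rewrite inE /= in_itv /= => ha; rewrite -orb_word_orb_on.
apply: continuous_in_subspaceT => a; rewrite inE /= in_itv /= => ha.
by apply: word_orb_continuous; rewrite gt_eqF // pos.
Qed.

Let word_continuous j c : p <= c <= q -> {for c, continuous (fun a => word_orb (delta p) a j)}.
Proof. by move=> hc; apply: word_orb_continuous; rewrite gt_eqF // pos. Qed.

Hypothesis k_gt0 : (0 < k)%N.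

Let k_range : (0 < k <= k)%N. Proof. by rewrite k_gt0 leqnn. Qed.

Lemma orb_ge1E c a : p <= c <= q -> p <= a <= q -> orb c k = 1 ->
  (1 <= orb a k) = (a <= c).
Proof.
move=> /andP[pc cq] /andP[pa aq] oc.
case: (leP a c) => ac; first by rewrite -oc orb_nonincr.
by apply/negbTE; rewrite -ltNge -oc orb_decr.
Qed.

Lemma orb_le_hole_loE c a : p <= c <= q -> p <= a <= q -> orb c k = hole_lo c ->
  (orb a k <= hole_lo a) = (c <= a).
Proof.
move=> hc ha oc; have [pc cq] := andP hc; have [pa aq] := andP ha.
case: (leP c a) => ca.
  have := hole_lo_le (param hc) (param ha) ca.
  by have := orb_nonincr (leqnn k) pc ca aq; lra.
have := hole_lo_lt (param ha) (param hc) ca; have := orb_decr k_range pa ca cq.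
by move=> ? ?; apply/negbTE; rewrite -ltNge; lra.
Qed.

Lemma hole_crossing : p < q -> orb p k = right_end p -> orb q k < hole_lo q ->
  exists a1 a2, [/\ p < a1, a1 < a2, a2 < q, orb a1 k = 1 & orb a2 k = hole_lo a2].
Proof.
move=> pq op oq; have hp : p <= p <= q by rewrite lexx ltW.
have hq : p <= q <= q by rewrite lexx ltW.
have gt1 := right_end_gt1 (param hp); have le1 := hole_lo_le1 (param hq).
have [a1 ha1 o1] : exists2 a1, p <= a1 <= q & orb a1 k = 1.
  have [|c hc] := @IVT_decr _ p q 1 (ltW pq) (word_continuous (j := k)).
    by rewrite -!orb_word_orb_on //; apply/andP; split; lra.
  by exists c => //; rewrite orb_word_orb_on.
have [pa1 a1q] := andP ha1.
have lt_pa1 : p < a1.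
  by rewrite lt_neqAle pa1 andbT; apply/eqP => e; move: o1; rewrite -e op; lra.
have lt_a1q : a1 < q by rewrite ltNge -(orb_ge1E ha1 hq o1) -ltNge; lra.
have /andP[_ q23] := param hq.
have g1 : hole_lo a1 < 1 by rewrite (hole_lo_lt1 (param ha1)); lra.
pose h a := word_orb (delta p) a k - hole_lo a.
have sub_pq c : a1 <= c <= q -> p <= c <= q.
  by case/andP=> a1c ->; rewrite (le_trans pa1 a1c).
have hcont c : a1 <= c <= q -> {for c, continuous h}.
  move=> /sub_pq hc; apply: continuousD; first exact: word_continuous.
  by apply/continuousN/hole_lo_continuous; rewrite lt_eqF //; case/andP: hc; lra.
have [|a2 /sub_pq ha2] := @IVT_decr h a1 q 0 (ltW lt_a1q) hcont.
  by rewrite /h -!orb_word_orb_on // o1; apply/andP; split; lra.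
rewrite /h -orb_word_orb_on // => /eqP; rewrite subr_eq0 => /eqP o2.
exists a1, a2; split => //; first by rewrite ltNge -(orb_le_hole_loE ha2 ha1 o2) o1 -ltNge.
by rewrite lt_neqAle (proj2 (andP ha2)) andbT; apply/eqP => e; move: oq; rewrite -e o2 ltxx.
Qed.

End Interval.

Lemma admissible_on_sub k p q p' q' : admissible_on k p q -> p <= p' -> q' <= q ->
  admissible_on k p' q'.
Proof.
by move=> adm pp qq a /andP[pa aq]; apply: adm; rewrite (le_trans pp pa) (le_trans aq qq).
Qed.

(* Left ends of blocks are parameters where some earlier T_a^j(0) was [hole_lo a],
   so that T_a^k(0) sits at the fixed point [right_end a]; right ends are
   parameters where some earlier T_a^j(0) was 1, so that the orbit returns to 0
   (or the end point 2/3). *)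
Definition block_right k (r : R) := r = 2/3 \/ exists2 n, (0 < n <= k)%N & orb r n = 0.

Definition block k (i : R * R) :=
  [/\ i.1 < i.2, orb i.1 k = right_end i.1 & block_right k i.2].

Lemma block_rightS k r : block_right k r -> block_right k.+1 r.
Proof. by case=> [|[n /andP[n0 nk] hn]]; [left|right; exists n; rewrite ?n0 ?(leq_trans nk)]. Qed.

Lemma block_right_below_hole k r : admissible k r -> block_right k r ->
  orb r k < 1 -> orb r k < hole_lo r.
Proof.
move=> [pr kr] hr rk; case: (ltP r (2/3)) => r23; last first.
  by move: rk; rewrite (param_eq23 pr r23) hole_lo23.
case: hr => [e|[n /andP[n0 nk] hn]]; first by move: r23; rewrite e ltxx.
have neq := orb_return_neq_hole_lo k pr r23 n0 hn.
have /notin_hole := kr _ (leq_trans (ltn_pmod k n0) nk); rewrite -(orb_mod k hn).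
by case=> [le|]; [rewrite lt_neqAle neq le|lra].
Qed.

Lemma block_crossing k l r : (0 < k)%N -> block k (l, r) -> admissible_on k l r ->
  orb r k < 1 ->
  exists a1 a2, [/\ l < a1, a1 < a2, a2 < r, orb a1 k = 1 & orb a2 k = hole_lo a2].
Proof.
move=> k0 [/= lr ol hr] adm rk; apply: hole_crossing => //.
by apply: block_right_below_hole => //; apply: adm; rewrite lexx ltW.
Qed.

Lemma split_block k l r : (0 < k)%N -> block k (l, r) -> admissible_on k l r ->
  exists L : seq (R * R),
    (forall a, (l <= a <= r /\ ~ inI a (orb a k)) <->
               exists2 i, i \in L & i.1 <= a <= i.2) /\
    (forall i, i \in L -> block k.+1 i).
Proof.
move=> k0 blk adm; have [/= lr ol hr] := blk.
have hl : l <= l <= r by rewrite lexx ltW.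
have hr' : l <= r <= r by rewrite lexx ltW.
have ol' : orb l k.+1 = right_end l by rewrite orbS ol (Tmap_right_end (adm _ hl).1).
have hrS := block_rightS hr.
case: (ltP (orb r k) 1) => rk; last first.
  exists [:: (l, r)]; split=> [a|i]; last by rewrite inE => /eqP ->.
  split=> [[ha _]|[i]]; first by exists (l, r); rewrite ?inE.
  rewrite inE => /eqP -> /= ha; split=> //; apply/notin_hole; right.
  by case/andP: ha => la ar; apply: le_trans rk (orb_nonincr adm (leqnn k) la ar (lexx r)).
have [a1 [a2 [la1 a12 a2r o1 o2]]] := block_crossing k0 blk adm rk.
have ha1 : l <= a1 <= r by rewrite (ltW la1) (ltW (lt_trans a12 a2r)).
have ha2 : l <= a2 <= r by rewrite (ltW a2r) (ltW (lt_trans la1 a12)).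
have not_hole a : l <= a <= r -> ~ inI a (orb a k) <-> a <= a1 \/ a2 <= a.
  move=> ha; rewrite notin_hole (orb_ge1E adm k0 ha1 ha o1).
  rewrite (orb_le_hole_loE adm k0 ha2 ha o2).
  by split; case; [right|left|right|left].
exists [:: (l, a1); (a2, r)]; split=> [a|i]; last first.
  rewrite !inE => /orP[]/eqP-> /=; split=> //.
    by right; exists k.+1; rewrite ?leqnn // orbS o1 Tmap1.
  have a23 : a2 < 2/3 by have /andP[_] := (adm _ hr').1; lra.
  by rewrite orbS o2 (Tmap_hole_lo (adm _ ha2).1 a23).
split=> [[/[dup] /andP[la ar] ha /(not_hole _ ha)[a_le|a_ge]]|[i]].
- by exists (l, a1); rewrite ?inE ?eqxx //= la a_le.
- by exists (a2, r); rewrite ?inE ?eqxx ?orbT //= a_ge ar.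
rewrite !inE => /orP[]/eqP-> /= /andP[h1 h2].
- have ha : l <= a <= r by rewrite h1 (le_trans h2 (proj2 (andP ha1))).
  by split=> //; apply/(not_hole _ ha); left.
- have ha : l <= a <= r by rewrite h2 (le_trans (proj1 (andP ha2)) h1).
  by split=> //; apply/(not_hole _ ha); right.
Qed.

Lemma cover_step k (s : seq (R * R)) : (0 < k)%N ->
  (forall i, i \in s -> block k i /\ admissible_on k i.1 i.2) ->
  exists s' : seq (R * R),
    (forall a, (exists2 i, i \in s & i.1 <= a <= i.2 /\ ~ inI a (orb a k)) <->
               exists2 i, i \in s' & i.1 <= a <= i.2) /\
    (forall i, i \in s' -> block k.+1 i).
Proof.
move=> k0; elim: s => [|[l r] s IH] Hs.
  by exists [::]; split=> // a; split; case.
have [[blk adm] Hs'] : (block k (l, r) /\ admissible_on k l r) /\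
    forall i, i \in s -> block k i /\ admissible_on k i.1 i.2.
  by split=> [|i hi]; apply: Hs; rewrite inE ?eqxx ?hi ?orbT.
have [L [covL blkL]] := split_block k0 blk adm.
have [s' [covs blks]] := IH Hs'.
exists (L ++ s'); split=> [a|i]; last by rewrite mem_cat => /orP[/blkL|/blks].
split=> [[i]|[i]].
  rewrite inE => /orP[/eqP-> /covL [j hj ha]|hi ha].
    by exists j; rewrite ?mem_cat ?hj.
  by have [j hj ha'] := (covs a).1 (ex_intro2 _ _ i hi ha); exists j; rewrite ?mem_cat ?hj ?orbT.
rewrite mem_cat => /orP[hi ha|hi ha].
  by exists (l, r); rewrite ?inE ?eqxx //; apply/covL; exists i.
by have [j hj ha'] := (covs a).2 (ex_intro2 _ _ i hi ha); exists j; rewrite ?inE ?hj ?orbT.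
Qed.

Lemma admissible_cover k : (0 < k)%N -> exists s : seq (R * R),
  (forall a, admissible k a <-> exists2 i, i \in s & i.1 <= a <= i.2) /\
  (forall i, i \in s -> block k i).
Proof.
elim: k => [//|[|k] IH] _.
  exists [:: (1/2, 2/3)]; split=> [a|i]; last first.
    rewrite inE => /eqP ->; split=> /=; [lra| |by left].
    by rewrite /orb /= /Tmap ltr01 /right_end; field.
  split=> [[pa _]|[i]]; first by exists (1/2, 2/3); rewrite ?inE.
  rewrite inE => /eqP -> /= pa; split=> // j; rewrite ltnS leqn0 => /eqP ->.
  by rewrite /inI -/(hole_lo a) /orb /= => /andP[h _]; have := hole_lo_ge0 pa; lra.
have [s [cov blk]] := IH isT.
have blk_adm i : i \in s -> block k.+1 i /\ admissible_on k.+1 i.1 i.2.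
  by move=> hi; split=> [|a ha]; [exact: blk|apply/cov; exists i].
have [s' [cov' blk']] := cover_step (ltn0Sn k) blk_adm.
exists s'; split=> // a; rewrite -cov' /admissible kappa_geS.
split=> [[pa [ka ha]]|[i hi [hai ha]]].
  by have [i hi hai] := (cov a).1 (conj pa ka); exists i.
by have [pa ka] := (cov a).2 (ex_intro2 _ _ i hi hai).
Qed.

Lemma good_pair_of_hole k l r a : (0 < k)%N -> block k (l, r) -> admissible_on k l r ->
  l <= a <= r -> inI a (orb a k) -> exists p q, good_pair k p q /\ p < a < q.
Proof.
move=> k0 blk adm ha; rewrite /inI -/(hole_lo a) => /andP[ga a_lt1].
have [la ar] := andP ha.
have rk : orb r k < 1 := le_lt_trans (orb_nonincr adm (leqnn k) la ar (lexx r)) a_lt1.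
have [a1 [a2 [la1 a12 a2r o1 o2]]] := block_crossing k0 blk adm rk.
have ha1 : l <= a1 <= r by rewrite (ltW la1) (ltW (lt_trans a12 a2r)).
have ha2 : l <= a2 <= r by rewrite (ltW a2r) (ltW (lt_trans la1 a12)).
exists a1, a2; split; first by split=> //; apply: admissible_on_sub adm (ltW la1) (ltW a2r).
by rewrite !ltNge -(orb_ge1E adm k0 ha1 ha o1) -(orb_le_hole_loE adm k0 ha2 ha o2) -!ltNge a_lt1 ga.
Qed.

Lemma hole_of_good_pair k (p q : R) a : (0 < k)%N -> good_pair k p q -> p < a < q ->
  param_ok a /\ kappa_eq a k.
Proof.
move=> k0 [pq adm op oq] /andP[pa aq].
have hp : p <= p <= q by rewrite lexx ltW.
have hq : p <= q <= q by rewrite lexx ltW.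
have ha : p <= a <= q by rewrite !ltW.
have [pa' ka] := adm a ha; split=> //; split=> //; rewrite /inI -/(hole_lo a).
by rewrite !ltNge (orb_ge1E adm k0 hp ha op) (orb_le_hole_loE adm k0 hq ha oq) -!ltNge pa aq.
Qed.

Lemma good_pair_left_eq k (p1 q1 p2 q2 : R) : (0 < k)%N ->
  good_pair k p1 q1 -> good_pair k p2 q2 -> p1 <= p2 < q1 -> p2 = p1.
Proof.
move=> k0 [pq1 adm1 o1 _] [_ _ o2 _] /andP[le12 lt21].
have h1 : p1 <= p1 <= q1 by rewrite lexx ltW.
have h2 : p1 <= p2 <= q1 by rewrite le12 ltW.
by apply/le_anti; rewrite le12 -(orb_ge1E adm1 k0 h1 h2 o1) o2 lexx.
Qed.

Lemma good_pair_right_eq k (p1 q1 p2 q2 : R) : (0 < k)%N ->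
  good_pair k p1 q1 -> good_pair k p2 q2 -> p1 < q2 <= q1 -> q2 = q1.
Proof.
move=> k0 [pq1 adm1 _ o1] [_ _ _ o2] /andP[lt12 le21].
have h1 : p1 <= q1 <= q1 by rewrite lexx ltW.
have h2 : p1 <= q2 <= q1 by rewrite le21 ltW.
by apply/le_anti; rewrite le21 -(orb_le_hole_loE adm1 k0 h1 h2 o1) o2 lexx.
Qed.

Lemma good_pair_unique k (p1 q1 p2 q2 : R) a : (0 < k)%N ->
  good_pair k p1 q1 -> good_pair k p2 q2 -> p1 < a < q1 -> p2 < a < q2 ->
  p1 = p2 /\ q1 = q2.
Proof.
move=> k0 g1 g2 /andP[pa1 aq1] /andP[pa2 aq2]; split.
  case: (leP p1 p2) => [le12|/ltW le21].
    by apply/esym/(good_pair_left_eq k0 g1 g2); rewrite le12 (lt_trans pa2 aq1).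
  by apply: (good_pair_left_eq k0 g2 g1); rewrite le21 (lt_trans pa1 aq2).
case: (leP q2 q1) => [le21|/ltW le12].
  by apply/esym/(good_pair_right_eq k0 g1 g2); rewrite le21 (lt_trans pa1 aq2).
by apply: (good_pair_right_eq k0 g2 g1); rewrite le12 (lt_trans pa2 aq1).
Qed.

End Orbits.

Theorem lemma5p1 (R : realType) (k : nat) : (2 <= k)%N ->
  (exists s : seq (R * R),
     (forall i, i \in s -> i.1 < i.2) /\
     (forall a : R, (param_ok a /\ kappa_ge a k) <->
        exists2 i, i \in s & i.1 <= a <= i.2) /\
     (forall i, i \in s ->
        (forall j, (1 <= j <= k)%N ->
           {within `[i.1, i.2], continuous (fun a : R => orb a j)} /\
           (forall x y : R, i.1 <= x -> x < y -> y <= i.2 -> orb y j < orb x j)) /\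
        (forall j, (1 <= j < k)%N -> forall x y : R,
           i.1 <= x <= i.2 -> i.1 <= y <= i.2 -> delta x j = delta y j)))
  /\
  ((forall a : R, (param_ok a /\ kappa_eq a k) <->
       exists p q : R, good_pair k p q /\ p < a < q) /\
   (forall p1 q1 p2 q2 : R, good_pair k p1 q1 -> good_pair k p2 q2 ->
       (p1, q1) <> (p2, q2) -> forall a : R, ~ (p1 < a < q1 /\ p2 < a < q2))).
Proof.
move=> k2; have k0 : (0 < k)%N by apply: leq_trans k2.
have [s [cov blk]] := admissible_cover R k0.
have adm i : i \in s -> admissible_on k i.1 i.2 by move=> hi a ha; apply/cov; exists i.
split.
  exists s; split=> [i /blk[]//|]; split=> // i hi.
  split=> [j jr|j /andP[_ jk] x y hx hy].
    have jk : (j <= k)%N by case/andP: jr.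
    by split; [exact (orb_continuous (adm _ hi) jk)|exact (orb_decr (adm _ hi) jr)].
  by rewrite (delta_const (adm _ hi) jk hx) (delta_const (adm _ hi) jk hy).
split=> [a|p1 q1 p2 q2 g1 g2 ne a [h1 h2]]; last first.
  by apply: ne; have [-> ->] := good_pair_unique k0 g1 g2 h1 h2.
split=> [[pa [ka hole]]|[p [q [g hpq]]]]; last exact: hole_of_good_pair k0 g hpq.
have [[l r] hi ha] := (cov a).1 (conj pa ka).
exact: good_pair_of_hole k0 (blk _ hi) (adm _ hi) ha hole.
Qed.
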